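(* Let $\mathcal E$ be an exchangeability system for a noncommutative probability space $(\mathcal A,\phi)$ and let $(X_{i,j})_{i\in[m],\,j\in[n_i]}\subseteq\mathcal A$, $n=n_1+\dots+n_m$. Then $$K_m\Big(\prod_{j=1}^{n_1}X_{1,j},\prod_{j=1}^{n_2}X_{2,j},\dots,\prod_{j=1}^{n_m}X_{m,j}\Big)=\sum_{\substack{\sigma\in\Pi_n\\ \sigma\ \text{indecomposable}}}K_\sigma(X_{1,1},\dots,X_{1,n_1},X_{2,1},\dots,X_{m,n_m}),$$ where products are taken in increasing order of $j$.
   Context: A noncommutative probability space is a pair $(\mathcal A,\phi)$ of a complex unital algebra $\mathcal A$ and a unital linear functional $\phi$. An exchangeability system $\mathcal E$ for $(\mathcal A,\phi)$ consists of a noncommutative probability space $(\mathcal U,\tilde\phi)$ and a family $(\iota_k)_{k\in\mathbb N}$ of embeddings (injective unital algebra homomorphisms) $\iota_k:\mathcal A\to\mathcal A_k\subseteq\mathcal U$ with $\tilde\phi\circ\iota_k=\phi$; write $X^{(k)}=\iota_k(X)$. It is required that for all $X_1,\dots,X_n\in\mathcal A$, indices $i_1,\dots,i_n\in\mathbb N$ and bijections $\sigma$ of $\mathbb N$, $\tilde\phi(X_1^{(i_1)}\cdots X_n^{(i_n)})=\tilde\phi(X_1^{(\sigma(i_1))}\cdots X_n^{(\sigma(i_n))})$; this value depends only on the kernel of $j\mapsto i_j$ and for a partition $\pi$ is denoted $\phi_\pi(X_1,\dots,X_n)$. $\Pi_n$ is the lattice of set partitions of $[n]$ under refinement with Möbius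 function $\mu$ and join $\vee$; $K_\pi=\sum_{\sigma\le\pi}\phi_\sigma\,\mu(\sigma,\pi)$, and $K_m(Y_1,\dots,Y_m)=K_{\hat1_m}(Y_1,\dots,Y_m)$ (equivalently $\frac1m\tilde\phi(Y_1^\omega\cdots Y_m^\omega)$ with $Y^\omega=\sum_{k=1}^m\omega^kY^{(k)}$, $\omega$ a primitive $m$-th root of unity). Identify $[n]$ with $\{(i,j):i\in[m],j\in[n_i]\}$ in lexicographic order. Each $\pi\in\Pi_m$ induces $\tilde\pi\in\Pi_n$ with blocks $\{(i,j):i\in B,j\in[n_i]\}$ for $B\in\pi$. A partition $\sigma\in\Pi_n$ is indecomposable if $\sigma\vee\tilde{\hat0}_m=\tilde{\hat1}_m$, where $\hat0_m,\hat1_m$ are the minimal and maximal elements of $\Pi_m$. *)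

From HB Require Import structures.
From mathcomp Require Import all_boot all_order all_algebra.
From mathcomp Require Import complex.
From mathcomp Require Import reals.
Set Implicit Arguments. Unset Strict Implicit. Unset Printing Implicit Defensive.
Import Order.TTheory GRing.Theory Num.Theory.
Local Open Scope ring_scope.

Definition is_part (n : nat) (P : {set {set 'I_n}}) : bool :=
  partition P [set: 'I_n].

Definition refines (n : nat) (s p : {set {set 'I_n}}) : bool :=
  [forall B in s, exists C in p, B \subset C].

Definition hat0 (n : nat) : {set {set 'I_n}} := [set [set i] | i : 'I_n].
Definition hat1 (n : nat) : {set {set 'I_n}} := [set [set: 'I_n]] :\ set0.

Definition join_is (n : nat) (s t r : {set {set 'I_n}}) : bool :=
  [&& is_part r, refines s r, refines t r &
      [forall r' : {set {set 'I_n}},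
         [&& is_part r', refines s r' & refines t r'] ==> refines r r']].

(* The fuel #|{set {set 'I_n}}| bounds the length
   of every strict chain in Pi_n, so it never runs out. *)
Fixpoint mobius_aux (R : pzRingType) (n : nat) (fuel : nat)
    (s p : {set {set 'I_n}}) : R :=
  match fuel with
  | 0 => 0
  | f.+1 =>
      if s == p then 1
      else if refines s p then
        - \sum_(z : {set {set 'I_n}} |
                 [&& is_part z, refines s z, refines z p & z != p])
            mobius_aux R f s z
      else 0
  end.

Definition mobius (R : pzRingType) (n : nat) (s p : {set {set 'I_n}}) : R :=
  mobius_aux R #|{: {set {set 'I_n}}}| s p.

(* phi_pi(X_1,...,X_n) = phit(X_1^(i_1) ... X_n^(i_n)) where j |-> i_j has
   kernel pi; as representative we label each block by its rank in the
   enumeration of {set 'I_n} (an injective labelling of the blocks). *)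
Definition phi_part (C A U : pzRingType) (phit : U -> C) (iota : nat -> A -> U)
    (n : nat) (X : 'I_n -> A) (P : {set {set 'I_n}}) : C :=
  phit (\prod_(j < n) iota (nat_of_ord (enum_rank (pblock P j))) (X j)).

Definition K_part (C A U : pzRingType) (phit : U -> C) (iota : nat -> A -> U)
    (n : nat) (X : 'I_n -> A) (P : {set {set 'I_n}}) : C :=
  \sum_(S : {set {set 'I_n}} | is_part S && refines S P)
     phi_part phit iota X S * mobius C S P.

Definition K_m (C A U : pzRingType) (phit : U -> C) (iota : nat -> A -> U)
    (m : nat) (Y : 'I_m -> A) : C :=
  K_part phit iota Y (hat1 m).

(* The family (X_{i,j}) is given as Xs : seq (seq A) with Xs`_i = [X_{i,1};...;X_{i,n_i}];
   position k of flatten Xs corresponds to the pair whose first coordinate is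
   reshape_index (shape Xs) k. *)

Definition flatN (A : Type) (Xs : seq (seq A)) : nat := size (flatten Xs).

(* tilde pi : the partition of [n] with blocks {(i,j) : i in B} for B in pi *)
Definition tilde (A : Type) (Xs : seq (seq A)) (P : {set {set 'I_(size Xs)}})
    : {set {set 'I_(flatN Xs)}} :=
  [set [set k : 'I_(flatN Xs) |
          [exists i : 'I_(size Xs), (i \in B) && (nat_of_ord i == reshape_index (shape Xs) k)]]
   | B : {set 'I_(size Xs)} in P].

Arguments tilde {A} Xs P.

Definition indecomposable (A : Type) (Xs : seq (seq A))
    (S : {set {set 'I_(flatN Xs)}}) : bool :=
  join_is S (tilde Xs (hat0 (size Xs))) (tilde Xs (hat1 (size Xs))).

Arguments indecomposable {A} Xs S.

Definition exchangeability_system (R : realType) (A U : algType R[i])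
    (phi : A -> R[i]) (phit : U -> R[i]) (iota : nat -> A -> U) : Prop :=
  (forall (a : R[i]) x y, phi (a *: x + y) = a * phi x + phi y) /\ phi 1 = 1 /\
  (forall (a : R[i]) x y, phit (a *: x + y) = a * phit x + phit y) /\ phit 1 = 1 /\
  (forall k, (forall (a : R[i]) x y, iota k (a *: x + y) = a *: iota k x + iota k y) /\
             (forall x y, iota k (x * y) = iota k x * iota k y) /\
             iota k 1 = 1 /\ injective (iota k)) /\
  (forall k x, phit (iota k x) = phi x) /\
  (forall (n : nat) (X : 'I_n -> A) (idx : 'I_n -> nat) (s : nat -> nat),
      bijective s ->
      phit (\prod_(j < n) iota (idx j) (X j)) =
      phit (\prod_(j < n) iota (s (idx j)) (X j))).

From HB Require Import structures.
From mathcomp Require Import all_boot all_order all_algebra.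
From mathcomp Require Import complex.
From mathcomp Require Import reals.
Import Order.TTheory GRing.Theory Num.Theory.
Local Open Scope ring_scope.
Set Implicit Arguments. Unset Strict Implicit. Unset Printing Implicit Defensive.

(* Write Y_i for the product of the i-th row.  As every iota_k is multiplicative, phi_pi(Y)
   is a moment of the X's with kernel pi~, so phi_pi(Y) = phi_pi~(X) by exchangeability, and
   Moebius inversion gives phi_pi~(X) = sum_(sigma <= pi~) K_sigma(X).  Hence
   K_m(Y) = sum_sigma K_sigma(X) * sum_(pi | sigma <= pi~) mu(pi, 1).  Now sigma <= pi~ iff
   collapse sigma <= pi, where collapse sigma is the partition of [m] generated by the pairs
   of rows met by a common block of sigma; so the inner sum is 1 if collapse sigma = 1 and 0
   otherwise, and collapse sigma = 1 is exactly the indecomposability of sigma. *)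

Section Partitions.
Variable n : nat.
Implicit Types P Q S : {set {set 'I_n}}.

Lemma cover_part P : is_part P -> cover P = [set: 'I_n].
Proof. by case/and3P => /eqP. Qed.

Lemma trivIset_part P : is_part P -> trivIset P.
Proof. by case/and3P. Qed.

Lemma set0_notin_part P : is_part P -> set0 \notin P.
Proof. by case/and3P. Qed.

Lemma pblock_part P x : is_part P -> pblock P x \in P.
Proof. by move=> hP; rewrite pblock_mem // cover_part. Qed.

Lemma mem_pblock_part P x : is_part P -> x \in pblock P x.
Proof. by move=> hP; rewrite mem_pblock cover_part. Qed.

Lemma def_pblock_part P B x : is_part P -> B \in P -> x \in B -> pblock P x = B.
Proof. by move/trivIset_part; apply: def_pblock. Qed.

Lemma same_pblock_part P x y :
  is_part P -> y \in pblock P x -> pblock P y = pblock P x.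
Proof. by move/trivIset_part; apply: same_pblock. Qed.

Lemma part_block_witness P B : is_part P -> B \in P -> exists x, x \in B.
Proof.
move=> hP PB; apply/set0Pn; apply: contraNneq (set0_notin_part hP) => <-.
exact: PB.
Qed.

Lemma is_partP P :
  (forall x, exists2 B, B \in P & x \in B) ->
  (forall B C x, B \in P -> C \in P -> x \in B -> x \in C -> B = C) ->
  set0 \notin P -> is_part P.
Proof.
move=> covP disjP P0; apply/and3P; split => //.
  rewrite eqEsubset subsetT /=; apply/subsetP => x _.
  by have [B PB xB] := covP x; apply/bigcupP; exists B.
apply/trivIsetP => B C PB PC neqBC; rewrite -setI_eq0; apply/set0Pn => -[x].
by rewrite inE => /andP[xB xC]; rewrite (disjP B C x) ?eqxx in neqBC.
Qed.

Lemma refines_refl P : refines P P.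
Proof. by apply/forall_inP => B PB; apply/exists_inP; exists B. Qed.

Lemma refines_trans P Q S : refines P Q -> refines Q S -> refines P S.
Proof.
move=> /forall_inP PQ /forall_inP QS; apply/forall_inP => B PB.
have /exists_inP[C QC BC] := PQ B PB; have /exists_inP[D SD CD] := QS C QC.
by apply/exists_inP; exists D; last exact: subset_trans CD.
Qed.

Lemma refinesP P Q : is_part P -> is_part Q ->
  reflect (forall x y, y \in pblock P x -> y \in pblock Q x) (refines P Q).
Proof.
move=> hP hQ; apply: (iffP forall_inP) => [PQ x y | PQ B PB].
  have /exists_inP[C QC /subsetP BC] := PQ _ (pblock_part x hP).
  by move/BC; rewrite (def_pblock_part hQ QC) // BC // mem_pblock_part.
have [x xB] := part_block_witness hP PB.
apply/exists_inP; exists (pblock Q x); first exact: pblock_part.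
by apply/subsetP => y yB; apply: PQ; rewrite (def_pblock_part hP PB xB).
Qed.

Lemma eq_part P Q : is_part P -> is_part Q ->
  (forall x, pblock P x = pblock Q x) -> P = Q.
Proof.
have sub P' Q' : is_part P' -> (forall x, pblock P' x = pblock Q' x) ->
    is_part Q' -> P' \subset Q'.
  move=> hP' PQ hQ'; apply/subsetP => B PB; have [x xB] := part_block_witness hP' PB.
  by rewrite -(def_pblock_part hP' PB xB) PQ pblock_part.
move=> hP hQ PQ; apply/eqP; rewrite eqEsubset !sub // => x; by rewrite PQ.
Qed.

Lemma refines_anti P Q : is_part P -> is_part Q ->
  refines P Q -> refines Q P -> P = Q.
Proof.
move=> hP hQ /(refinesP hP hQ) PQ /(refinesP hQ hP) QP.
by apply: eq_part => // x; apply/setP => y; apply/idP/idP => [/PQ | /QP].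
Qed.

End Partitions.

Section Mobius.
Variables (C : pzRingType) (n : nat).
Implicit Types s t p z : {set {set 'I_n}}.

Definition card_refining p := #|[set z | is_part z && refines z p]|.

Lemma card_refining_gt0 p : is_part p -> (0 < card_refining p)%N.
Proof. by move=> hp; apply/card_gt0P; exists p; rewrite inE hp refines_refl. Qed.

Lemma card_refining_ltn z p : is_part z -> is_part p ->
  refines z p -> z != p -> (card_refining z < card_refining p)%N.
Proof.
move=> hz hp zp neq_zp; apply: proper_card; apply/properP; split.
  by apply/subsetP => w; rewrite !inE => /andP[-> /refines_trans->].
exists p; first by rewrite inE hp refines_refl.
by rewrite inE hp; apply: contra neq_zp => pz; rewrite (refines_anti hz hp).
Qed.

(* The recursion only descends to strictly finer partitions, which have fewer refinements,
   so fuel beyond card_refining p is never consumed. *)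
Lemma mobius_aux_stable f s p : is_part p -> (card_refining p <= f)%N ->
  mobius_aux C f s p = mobius_aux C f.+1 s p.
Proof.
elim: f s p => [|f IHf] s p hp; first by rewrite leqNgt card_refining_gt0.
move=> le_p_f /=; case: eqP => // _; case: ifP => // _; congr (- _).
apply: eq_bigr => z /and4P[hz _ zp neq_zp]; apply: IHf => //.
by rewrite -ltnS (leq_trans (card_refining_ltn hz hp zp neq_zp)).
Qed.

Lemma mobiusE s p : is_part p -> mobius C s p =
  if s == p then 1 else if refines s p then
    - \sum_(z | [&& is_part z, refines s z, refines z p & z != p]) mobius C s z
  else 0.
Proof.
rewrite /mobius => hp; have := max_card (mem [set z | is_part z && refines z p]).
rewrite -/(card_refining p); case: #|_| => [|N le_p_N].
  by rewrite leqNgt card_refining_gt0.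
rewrite /=; case: eqP => // _; case: ifP => // _; congr (- _).
apply: eq_bigr => z /and4P[hz _ zp neq_zp]; apply: mobius_aux_stable => //.
by rewrite -ltnS (leq_trans (card_refining_ltn hz hp zp neq_zp)).
Qed.

Lemma mobius_refl p : is_part p -> mobius C p p = 1.
Proof. by move=> hp; rewrite mobiusE // eqxx. Qed.

Lemma mobius_eq0 s p : is_part p -> ~~ refines s p -> mobius C s p = 0.
Proof.
move=> hp not_sp; rewrite mobiusE // (negbTE not_sp).
by case: eqP not_sp => // ->; rewrite refines_refl.
Qed.

Lemma sum_mobius_left s t : is_part s -> is_part t ->
  \sum_(z | [&& is_part z, refines s z & refines z t]) mobius C s z = (s == t)%:R.
Proof.
move=> hs ht; have [st | not_st] := boolP (refines s t); last first.
  rewrite big_pred0 => [|z]; last first.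
    by apply/and3P => -[_ sz zt]; rewrite (refines_trans sz zt) in not_st.
  by case: eqP not_st => // ->; rewrite refines_refl.
rewrite (bigD1 t) /=; last by rewrite ht st refines_refl.
have [<- | neq_st] := eqVneq s t.
  rewrite mobius_refl // big1 ?addr0 // => z /andP[/and3P[hz sz zs]].
  by rewrite (refines_anti hz hs zs sz) eqxx.
rewrite mobiusE // (negbTE neq_st) st; apply/eqP; rewrite addrC subr_eq0; apply/eqP.
by apply: eq_bigl => z; rewrite !andbA.
Qed.

End Mobius.

Section MobiusRight.
Variable C : comUnitRingType.

Lemma kernel_mul1C (T : finType) (f g : T -> T -> C) :
  (forall s t, \sum_x f s x * g x t = (s == t)%:R) ->
  forall s t, \sum_x g s x * f x t = (s == t)%:R.
Proof.
pose M (h : T -> T -> C) := \matrix_(i, j < #|T|) h (enum_val i) (enum_val j).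
have sumE (F : T -> C) : \sum_(k < #|T|) F (enum_val k) = \sum_x F x.
  by rewrite -big_enum_val.
have mulM h h' : M h *m M h' = M (fun s t => \sum_x h s x * h' x t).
  apply/matrixP => i j; rewrite !mxE -sumE.
  by apply: eq_bigr => k _; rewrite !mxE.
have M1 : M (fun s t => (s == t)%:R) = 1%:M.
  by apply/matrixP => i j; rewrite !mxE (inj_eq enum_val_inj).
move=> fg s t; have /matrixP/(_ (enum_rank s) (enum_rank t)) : M g *m M f = 1%:M.
  apply: mulmx1C; rewrite mulM -M1; apply/matrixP => i j; rewrite !mxE.
  exact: fg.
by rewrite mulM !mxE !enum_rankK (inj_eq enum_rank_inj).
Qed.

(* mu is a left inverse of the zeta kernel on partitions (sum_mobius_left), hence also a
   right inverse. *)
Lemma sum_mobius_right n (s t : {set {set 'I_n}}) : is_part s -> is_part t ->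
  \sum_(z | is_part z && refines s z) mobius C z t = (s == t)%:R.
Proof.
pose zeta (x y : {z in @is_part n}) : C := (refines (val x) (val y))%:R.
pose mu (x y : {z in @is_part n}) := mobius C (val x) (val y).
have sum_parts (F : {set {set 'I_n}} -> C) (b : pred {set {set 'I_n}}) :
    \sum_(z : {z in @is_part n} | b (val z)) F (val z) = \sum_(z | is_part z && b z) F z.
  by rewrite big_sub_cond.
have part_val (x : {z in @is_part n}) : is_part (val x) := valP x.
have zeta_mu x y : \sum_z zeta x z * mu z y = (x == y)%:R.
  move: x y; apply: kernel_mul1C => x y; rewrite -(inj_eq val_inj) /=.
  rewrite -sum_mobius_left ?part_val //.
  rewrite -(sum_parts _ (fun z => refines (val x) z && refines z (val y))) [RHS]big_mkcond.
  apply: eq_bigr => z _; rewrite /mu /zeta.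
  have [xz | not_xz] := boolP (refines (val x) (val z)); last first.
    by rewrite mobius_eq0 ?mul0r ?part_val.
  by case: refines; rewrite ?mulr1 ?mulr0.
move=> hs ht; have := zeta_mu (Sub s hs) (Sub t ht); rewrite -(inj_eq val_inj) !SubK.
move=> <-; rewrite -(sum_parts _ (refines s)) big_mkcond.
by apply: eq_bigr => z _; rewrite /zeta /mu SubK; case: refines; rewrite ?mul1r ?mul0r.
Qed.

End MobiusRight.

Lemma sum_K_part_refines (C A U : pzRingType) (phit : U -> C)
    (iota : nat -> A -> U) n (X : 'I_n -> A) (t : {set {set 'I_n}}) :
  is_part t ->
  \sum_(s | is_part s && refines s t) K_part phit iota X s = phi_part phit iota X t.
Proof.
move=> ht; rewrite /K_part (exchange_big_dep (fun r => is_part r && refines r t)) /=;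
  last by move=> s r /andP[_ st] /andP[-> /refines_trans->].
have inner r : is_part r ->
    \sum_(s | [&& is_part s && refines s t, is_part r & refines r s])
      phi_part phit iota X r * mobius C r s = phi_part phit iota X r * (r == t)%:R.
  move=> hr; rewrite -big_distrr -sum_mobius_left //=; congr (_ * _).
  by apply: eq_bigl => s; rewrite hr /= -andbA [refines s t && _]andbC.
rewrite (bigD1 t) /=; last by rewrite ht refines_refl.
rewrite inner // eqxx mulr1 big1 ?addr0 // => r.
by case/andP=> /andP[hr _] neq_rt; rewrite inner // (negbTE neq_rt) mulr0.
Qed.

Section ExtremalPartitions.
Variable m : nat.
Implicit Types P : {set {set 'I_m}}.

Lemma setT_in_hat1 (i : 'I_m) : [set: 'I_m] \in hat1 m.
Proof. by rewrite !inE eqxx andbT; apply/set0Pn; exists i. Qed.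

Lemma hat0_part : is_part (hat0 m).
Proof.
apply: is_partP => [x | B C x /imsetP[a _ ->] /imsetP[b _ ->] | ].
- by exists [set x]; [apply: imset_f | rewrite inE].
- by rewrite !inE => /eqP-> /eqP->.
- by apply/imsetP => -[a _] /setP/(_ a); rewrite !inE eqxx.
Qed.

Lemma hat1_part : is_part (hat1 m).
Proof.
have hat1T B : B \in hat1 m -> B = [set: 'I_m] by rewrite !inE => /andP[_ /eqP].
apply: is_partP => [x | B C x /hat1T-> /hat1T-> // | ]; last by rewrite !inE eqxx.
by exists [set: 'I_m]; [apply: setT_in_hat1 | rewrite inE].
Qed.

Lemma pblock_hat0 i : pblock (hat0 m) i = [set i].
Proof. by apply: def_pblock_part; [exact: hat0_part | apply: imset_f | rewrite inE]. Qed.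

Lemma pblock_hat1 i : pblock (hat1 m) i = [set: 'I_m].
Proof.
by apply: def_pblock_part; [exact: hat1_part | apply: setT_in_hat1 | rewrite inE].
Qed.

Lemma refines_hat1 P : is_part P -> refines P (hat1 m).
Proof. by move=> hP; apply/(refinesP hP hat1_part) => x y _; rewrite pblock_hat1 inE. Qed.

Lemma hat0_refines P : is_part P -> refines (hat0 m) P.
Proof.
move=> hP; apply/(refinesP hat0_part hP) => x y.
by rewrite pblock_hat0 inE => /eqP->; apply: mem_pblock_part.
Qed.

End ExtremalPartitions.

Section Rows.
Variables (A : Type) (Xs : seq (seq A)).
Local Notation m := (size Xs).
Local Notation N := (flatN Xs).
Implicit Types (P Q : {set {set 'I_m}}) (S : {set {set 'I_N}}).

Fact row_of_subproof (k : 'I_N) : (reshape_index (shape Xs) k < m)%N.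
Proof. by rewrite -(size_map size) reshape_indexP // -size_flatten. Qed.

Definition row_of (k : 'I_N) : 'I_m := Ordinal (row_of_subproof k).

Lemma tildeE P : tilde Xs P = [set row_of @^-1: B | B : {set 'I_m} in P].
Proof.
apply: eq_imset => B; apply/setP => k; rewrite !inE.
apply/existsP/idP => [[i /andP[iB /eqP ik]] | kB].
  by rewrite (_ : row_of k = i) //; apply: val_inj.
by exists (row_of k); rewrite eqxx andbT.
Qed.

Hypothesis rows_nonempty : forall i, (i < m)%N -> (0 < size (nth [::] Xs i))%N.

Lemma row_of_onto (i : 'I_m) : exists k, row_of k = i.
Proof.
have row_i : (0 < nth 0 (shape Xs) i)%N by rewrite nth_shape rows_nonempty.
have k_lt : (flatten_index (shape Xs) i 0 < N)%N.
  by rewrite /flatN size_flatten flatten_indexP.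
by exists (Ordinal k_lt); apply: val_inj; rewrite /= flatten_indexKl.
Qed.

Lemma preimset_row_of_inj : injective (fun B : {set 'I_m} => row_of @^-1: B).
Proof.
move=> B C /setP BC; apply/setP => i; have [k <-] := row_of_onto i.
by have := BC k; rewrite !inE.
Qed.

Lemma tilde_part P : is_part P -> is_part (tilde Xs P).
Proof.
move=> hP; rewrite tildeE; apply: is_partP.
- move=> k; exists (row_of @^-1: pblock P (row_of k)); first exact/imset_f/pblock_part.
  by rewrite inE mem_pblock_part.
- move=> _ _ k /imsetP[B PB ->] /imsetP[C PC ->]; rewrite !inE => kB kC.
  by rewrite -(def_pblock_part hP PB kB) -(def_pblock_part hP PC kC).
- apply/imsetP => -[B PB B0]; have /negP[] := set0_notin_part hP.
  by rewrite (@preimset_row_of_inj set0 B) // preimset0.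
Qed.

Lemma pblock_tilde P k : is_part P ->
  pblock (tilde Xs P) k = row_of @^-1: pblock P (row_of k).
Proof.
move=> hP; apply: def_pblock_part; first exact: tilde_part.
  by rewrite tildeE; apply/imset_f/pblock_part.
by rewrite inE mem_pblock_part.
Qed.

Lemma refines_tilde P Q : is_part P -> is_part Q ->
  refines (tilde Xs P) (tilde Xs Q) = refines P Q.
Proof.
move=> hP hQ; apply/(refinesP (tilde_part hP) (tilde_part hQ))/(refinesP hP hQ).
  move=> PQ i j; have [k <-] := row_of_onto i; have [k' <-] := row_of_onto j.
  by have := PQ k k'; rewrite !pblock_tilde // !inE.
by move=> PQ k k'; rewrite !pblock_tilde // !inE; apply: PQ.
Qed.

Definition row_link S : rel 'I_m := fun i j =>
  [exists k, exists k', [&& k' \in pblock S k, row_of k == i & row_of k' == j]].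

Definition collapse S := equivalence_partition (connect (row_link S)) [set: 'I_m].

Section Collapse.
Variable S : {set {set 'I_N}}.
Hypothesis hS : is_part S.

Lemma row_link_sym : symmetric (row_link S).
Proof.
move=> i j; apply/existsP/existsP => -[k /existsP[k' /and3P[kk' ik jk']]];
  exists k'; apply/existsP; exists k;
  by rewrite ik jk' andbT (same_pblock_part hS kk') mem_pblock_part.
Qed.

Lemma connect_row_link_equiv :
  {in [set: 'I_m] & &, equivalence_rel (connect (row_link S))}.
Proof.
move=> i j l _ _ _; split=> [|ij]; first exact: connect0.
by apply/idP/idP; apply: connect_trans; rewrite // (sym_connect_sym row_link_sym).
Qed.

Lemma collapse_part : is_part (collapse S).
Proof. exact: equivalence_partitionP connect_row_link_equiv. Qed.

Lemma pblock_collapse i j : (j \in pblock (collapse S) i) = connect (row_link S) i j.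
Proof. by rewrite (pblock_equivalence_partition connect_row_link_equiv) ?inE. Qed.

Lemma refines_tilde_collapse P : is_part P ->
  refines S (tilde Xs P) = refines (collapse S) P.
Proof.
move=> hP; apply/(refinesP hS (tilde_part hP))/(refinesP collapse_part hP).
  move=> S_P i j; rewrite pblock_collapse.
  have cl : closed (row_link S) [pred x | pblock P x == pblock P i].
    move=> _ _ /existsP[k /existsP[k' /and3P[kk' /eqP<- /eqP<-]]] /=.
    by have := S_P k k' kk'; rewrite pblock_tilde // !inE => /(same_pblock_part hP)->.
  move/(closed_connect cl); rewrite inE eqxx => /esym/eqP <-.
  exact: mem_pblock_part.
move=> coll_P k k' kk'; rewrite pblock_tilde // inE; apply: coll_P.
rewrite pblock_collapse connect1 //.
by apply/existsP; exists k; apply/existsP; exists k'; rewrite kk' !eqxx.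
Qed.

End Collapse.

Lemma row_sub_pblock S k k' : is_part S -> refines (tilde Xs (hat0 m)) S ->
  row_of k' = row_of k -> k' \in pblock S k.
Proof.
move=> hS /(refinesP (tilde_part (hat0_part m)) hS) rowsS kk'; apply: rowsS.
by rewrite pblock_tilde ?hat0_part // pblock_hat0 !inE kk'.
Qed.

Lemma tilde_collapse S : is_part S -> refines (tilde Xs (hat0 m)) S ->
  tilde Xs (collapse S) = S.
Proof.
move=> hS rowsS; have hT := tilde_part (collapse_part hS).
apply: refines_anti => //; last first.
  by rewrite refines_tilde_collapse ?refines_refl ?collapse_part.
apply/(refinesP hT hS) => k k'.
rewrite pblock_tilde ?collapse_part // inE pblock_collapse //.
pose meets := [pred i | [exists k'', (row_of k'' == i) && (k'' \in pblock S k)]].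
have meets_link i j : row_link S i j -> meets i -> meets j.
  case/existsP=> k1 /existsP[k2 /and3P[k12 /eqP<- /eqP<-]].
  case/existsP=> k'' /andP[/eqP k1k'' k''k].
  apply/existsP; exists k2; rewrite eqxx /= -(same_pblock_part hS k''k).
  by rewrite (same_pblock_part hS (row_sub_pblock hS rowsS k1k'')).
have cl : closed (row_link S) meets.
  by move=> i j ij; apply/idP/idP; apply: meets_link; rewrite // row_link_sym.
move/(closed_connect cl); rewrite !inE => meets_k.
have /existsP[k'' /andP[/eqP k'k'' k''k]] : meets (row_of k').
  by rewrite inE -meets_k; apply/existsP; exists k; rewrite eqxx mem_pblock_part.
by rewrite -(same_pblock_part hS k''k) (row_sub_pblock hS rowsS (esym k'k'')).
Qed.

Lemma indecomposableE S : is_part S -> indecomposable Xs S = (collapse S == hat1 m).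
Proof.
move=> hS; have hC := collapse_part hS; have [h0 h1] := (hat0_part m, hat1_part m).
rewrite /indecomposable /join_is tilde_part // refines_tilde_collapse //.
rewrite refines_hat1 // refines_tilde // hat0_refines //=.
apply/forallP/eqP => [join | coll1 T].
  have := join (tilde Xs (collapse S)); rewrite tilde_part // refines_tilde_collapse //.
  rewrite refines_refl !refines_tilde // hat0_refines //= => hat1_C.
  by apply: refines_anti; rewrite ?refines_hat1.
apply/implyP => /and3P[hT ST rowsT]; rewrite -(tilde_collapse hT rowsT).
rewrite refines_tilde ?collapse_part // -coll1 -refines_tilde_collapse ?collapse_part //.
by rewrite tilde_collapse.
Qed.

End Rows.

Definition swapn (a b k : nat) : nat := if k == a then b else if k == b then a else k.

Lemma swapnK a b : involutive (swapn a b).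
Proof.
move=> k; rewrite /swapn; case: (eqVneq k a) => [->|ka].
  by rewrite eqxx; case: eqVneq.
by case: (eqVneq k b) => [->|kb]; rewrite ?eqxx ?(negbTE ka) ?(negbTE kb) //; case: eqVneq.
Qed.

Lemma relabel_same_kernel (I : eqType) (r : seq I) (f g : I -> nat) :
  {in r &, forall i j, (f i == f j) = (g i == g j)} ->
  exists2 s : nat -> nat, bijective s & {in r, forall i, s (f i) = g i}.
Proof.
elim: r => [|i r IHr] same_ker; first by exists id; first exact: inv_bij.
have [|s s_bij s_r] := IHr; first by apply: sub_in2 same_ker => j jr; rewrite inE jr orbT.
have same_ker_i j : j \in r -> (f j == f i) = (g j == g i).
  by move=> jr; rewrite same_ker ?inE ?jr ?eqxx ?orbT.
have [/mapP[j jr fij] | fi_new] := boolP (f i \in map f r).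
  exists s => // l /predU1P[-> | /s_r //]; rewrite fij s_r //.
  by apply/eqP; rewrite -same_ker_i // fij.
exists (swapn (s (f i)) (g i) \o s); first exact: bij_comp (inv_bij (swapnK _ _)) s_bij.
move=> l /predU1P[-> | lr]; first by rewrite /= /swapn eqxx.
have fl_fi : f l != f i by apply: contraNneq fi_new => <-; apply: map_f.
rewrite /= /swapn (inj_eq (bij_inj s_bij)) (negbTE fl_fi) s_r //.
by rewrite -same_ker_i // (negbTE fl_fi).
Qed.

Lemma reshape_index_cons a sh k :
  reshape_index (a :: sh) k = if (k < a)%N then 0%N else (reshape_index sh (k - a)).+1.
Proof.
rewrite /reshape_index /= subn_eq0; case: ltnP => // le_a_k.
by rewrite subSn.
Qed.

Lemma big_flatten_reshape (R : Type) (idx : R) (op : Monoid.law idx) (T : Type)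
    (x0 : T) (Xs : seq (seq T)) (F : nat -> T -> R) :
  \big[op/idx]_(0 <= i < size Xs) \big[op/idx]_(x <- nth [::] Xs i) F i x =
  \big[op/idx]_(0 <= k < size (flatten Xs))
     F (reshape_index (shape Xs) k) (nth x0 (flatten Xs) k).
Proof.
elim: Xs F => [|s Xs IHXs] F; first by rewrite !big_geq.
rewrite big_nat_recl // [in LHS](IHXs (fun i => F i.+1)) size_cat.
rewrite (big_cat_nat _ (leq_addr _ _)) // (big_nth x0).
congr (op _ _).
  apply: eq_big_nat => k /andP[_ ks].
  by rewrite [shape _]/= reshape_index_cons ks [flatten _]/= nth_cat ks.
rewrite -{1}[size s]add0n big_addn addKn; apply: eq_bigr => k _.
by rewrite [shape _]/= reshape_index_cons [flatten _]/= nth_cat ltnNge leq_addl /= addnK.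
Qed.

Section Exchangeable.
Variables (C A U : pzRingType) (phit : U -> C) (iota : nat -> A -> U).
Hypothesis iotaM : forall k x y, iota k (x * y) = iota k x * iota k y.
Hypothesis iota1 : forall k, iota k 1 = 1.
Hypothesis exchangeable : forall n (X : 'I_n -> A) (lab : 'I_n -> nat) (s : nat -> nat),
  bijective s ->
  phit (\prod_(j < n) iota (lab j) (X j)) = phit (\prod_(j < n) iota (s (lab j)) (X j)).

Lemma phit_prod_same_kernel n (X : 'I_n -> A) (lab lab' : 'I_n -> nat) :
  (forall j j', (lab j == lab j') = (lab' j == lab' j')) ->
  phit (\prod_(j < n) iota (lab j) (X j)) = phit (\prod_(j < n) iota (lab' j) (X j)).
Proof.
move=> same_ker.
have [s s_bij s_lab] := relabel_same_kernel (in2W same_ker (D1 := mem (enum 'I_n))).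
rewrite (exchangeable X lab s_bij); congr phit.
by apply: eq_bigr => j _; rewrite s_lab ?mem_enum.
Qed.

Variables (Xs : seq (seq A)).
Hypothesis rows_nonempty : forall i, (i < size Xs)%N -> (0 < size (nth [::] Xs i))%N.

Lemma phi_part_tilde P : is_part P ->
  phi_part phit iota (fun i : 'I_(size Xs) => \prod_(x <- nth [::] Xs i) x) P =
  phi_part phit iota (fun k : 'I_(flatN Xs) => nth 0 (flatten Xs) k) (tilde Xs P).
Proof.
move=> hP; rewrite /phi_part.
pose lab (i : 'I_(size Xs)) : nat := enum_rank (pblock P i).
pose L (i : nat) := if insub i is Some i' then lab i' else 0%N.
have labE (i : 'I_(size Xs)) : L i = lab i by rewrite /L valK.
transitivity
  (phit (\prod_(k < flatN Xs) iota (lab (row_of k)) (nth 0 (flatten Xs) k))).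
  congr phit.
  under eq_bigr => i _ do rewrite (big_morph _ (iotaM _) (iota1 _)) -/(lab i) -labE.
  rewrite -(big_mkord xpredT (fun i => \prod_(x <- nth [::] Xs i) iota (L i) x)).
  by rewrite (big_flatten_reshape _ 0) big_mkord; apply: eq_bigr => k _; rewrite -labE.
apply: phit_prod_same_kernel => k k'; rewrite !pblock_tilde // /lab.
apply/eqP/eqP => [/val_inj/enum_rank_inj-> // | /val_inj/enum_rank_inj eq_pre].
by rewrite (preimset_row_of_inj rows_nonempty eq_pre).
Qed.

End Exchangeable.

Unset Implicit Arguments.

Theorem proposition3p3 (R : realType) (A U : algType R[i])
    (phi : A -> R[i]) (phit : U -> R[i]) (iota : nat -> A -> U)
    (Xs : seq (seq A)) :
  exchangeability_system phi phit iota ->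
  (forall i, (i < size Xs)%N -> (0 < size (nth [::] Xs i))%N) ->
  K_m phit iota (fun i : 'I_(size Xs) => \prod_(x <- nth [::] Xs i) x) =
  \sum_(S : {set {set 'I_(flatN Xs)}} | is_part S && indecomposable Xs S)
     K_part phit iota (fun k : 'I_(flatN Xs) => nth 0 (flatten Xs) k) S.
Proof.
move=> [_ [_ [_ [_ [iota_hom [_ exchangeable]]]]]] rows_nonempty.
have iotaM k x y : iota k (x * y) = iota k x * iota k y by have [_ []] := iota_hom k.
have iota1 k : iota k 1 = 1 by have [_ [_ []]] := iota_hom k.
set X := fun k : 'I_(flatN Xs) => nth 0 (flatten Xs) k.
rewrite /K_m {1}/K_part (eq_bigl (@is_part _)) => [|P]; last first.
  exact/andb_idr/refines_hat1.
under eq_bigr => P hP.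
  rewrite (phi_part_tilde iotaM iota1 exchangeable rows_nonempty hP) -/X.
  by rewrite -sum_K_part_refines ?tilde_part // big_distrl; over.
rewrite (exchange_big_dep (@is_part _)) /=; last by move=> P S _ /andP[].
rewrite [RHS]big_mkcondr; apply: eq_bigr => S hS; rewrite -big_distrr /=.
rewrite (eq_bigl (fun P => is_part P && refines (collapse S) P)) => [|P]; last first.
  by rewrite hS; apply: andb_id2l => hP; rewrite refines_tilde_collapse.
rewrite sum_mobius_right ?collapse_part ?hat1_part // indecomposableE //.
by case: eqP; rewrite ?mulr1 ?mulr0.
Qed.
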